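(* Let ${\bf r}=(r_0,r_1,\dots)$ be a finitely supported sequence of nonnegative integers with $n=\sum_{d\ge1}r_d$, and let $k\ge0$ be an integer. For any two ${\bf S}^{(1)},{\bf S}^{(2)}\in V_{\bf r}$, $$|\mathcal{CF}_{{\bf r},k,{\bf S}^{(1)}}|=|\mathcal{CF}_{{\bf r},k,{\bf S}^{(2)}}|.$$
   Context: A plane tree is an unlabelled rooted tree in which the children of every vertex are linearly ordered; a plane forest is a finite linearly ordered sequence of plane trees. For vertices $u,v$ in a tree, $v$ is a descendant of $u$ if $u$ lies on the path from the root to $v$ (so $u$ is a descendant of itself). The degree $d_v$ is the number of children of $v$; $v$ is internal if $d_v\ge1$. $I(F)$ is the set of internal vertices of $F$. A plane forest has type ${\bf r}$ if it has exactly $r_i$ vertices of degree $i$ for all $i\ge0$. A labelled forest is a plane forest $F$ together with a bijection (labelling) $I(F)\to[n]$. An internal vertex $v$ of a labelled forest is proper if no internal descendant of $v$ has a smaller label than $v$, and improper otherwise. Fix colors $c_1,c_2,\dots$ and distinct special colors $c_1',c_2',\dots$. A proper $k$-coloring of a labelled forest assigns to each internal vertex $v$ a color, taken from $\{c_1,\dots,c_{d_v}\}$ if $v$ is proper and from $\{c_1,\dots,c_{d_v}\}\cup\{c_1',\dots,c_k'\}$ if $v$ is improper. A $k$-colored labelled forest is a labelled forest together with a proper $k$-coloring; $\mathcal{CF}_{{\bf r},k}$ is the set of $k$-colored labelled forests whose underlying plane forest has type ${\bf r}$. $V_{\bf r}$ is the set of sequences ${\bf S}=(S_1,S_2,\dots)$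 of pairwise disjoint subsets of $[n]$ with union $[n]$ and $|S_i|=r_i$ for all $i\ge1$. For ${\bf S}\in V_{\bf r}$, $\mathcal{CF}_{{\bf r},k,{\bf S}}$ is the set of forests in $\mathcal{CF}_{{\bf r},k}$ in which every internal vertex $v$ has its label in $S_{d_v}$. *)

From HB Require Import structures.
From mathcomp Require Import all_boot.
From mathcomp Require Import classical_sets cardinality.
Set Implicit Arguments. Unset Strict Implicit. Unset Printing Implicit Defensive.

Inductive dtree (A : Type) : Type := DNode of A & seq (dtree A).
Arguments DNode {A}.

(* Colors: Col i is c_i, Spc j is the special color c'_j (i, j >= 1). *)
Inductive color : Type := Col of nat | Spc of nat.

Definition color2sum (c : color) : nat + nat :=
  match c with Col i => inl i | Spc j => inr j end.
Definition sum2color (s : nat + nat) : color :=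
  match s with inl i => Col i | inr j => Spc j end.
Lemma color2sumK : cancel color2sum sum2color. Proof. by case. Qed.
HB.instance Definition _ := Equality.copy color (can_type color2sumK).

(* A vertex of a k-colored labelled forest carries [Some (label, color)]   *)
(* if it is internal, and [None] if it is a leaf.                         *)
Definition deco := option (nat * color).
Definition ctree := dtree deco.
Definition cforest := seq ctree.

Fixpoint labels (t : ctree) : seq nat :=
  let: DNode a ch := t in
  (if a is Some (l, _) then [:: l] else [::]) ++ flatten (map labels ch).

(* one record per vertex v : (decoration of v, degree d_v,
   labels of the internal descendants of v (v included)) *)
Fixpoint vinfo (t : ctree) : seq (deco * nat * seq nat) :=
  let: DNode a ch := t in
  (a, size ch, labels t) :: flatten (map vinfo ch).

Definition fverts (F : cforest) := flatten (map vinfo F).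
Definition flabels (F : cforest) := flatten (map labels F).

(* n = sum_{d >= 1} r_d ; r is encoded as a (finitely supported) seq nat,
   r_i = nth 0 r i *)
Definition nint (r : seq nat) : nat := sumn (behead r).

(* v is proper : no internal descendant has a smaller label *)
Definition proper_info (l : nat) (L : seq nat) : bool := all (fun m => l <= m) L.

Definition vertex_ok (k : nat) (S : nat -> pred nat) (v : deco * nat * seq nat) : Prop :=
  let: (a, d, L) := v in
  match a with
  | None => d = 0
  | Some (l, c) =>
      0 < d /\
      (match c with
       | Col i => 1 <= i <= d
       | Spc j => ~~ proper_info l L /\ 1 <= j <= k
       end) /\
      S d l
  end.

Definition CF (r : seq nat) (k : nat) (S : nat -> pred nat) (F : cforest) : Prop :=
  (forall i, count (fun v : deco * nat * seq nat => v.1.2 == i) (fverts F) = nth 0 r i) /\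
  perm_eq (flabels F) (iota 1 (nint r)) /\
  (forall v, v \in fverts F -> vertex_ok k S v).

(* V_r : S = (S_1, S_2, ...) pairwise disjoint subsets of [n], union [n],
   |S_i| = r_i for i >= 1  (S 0 is irrelevant) *)
Definition inV (r : seq nat) (S : nat -> pred nat) : Prop :=
  (forall i j x, 1 <= i -> 1 <= j -> i != j -> ~~ (S i x && S j x)) /\
  (forall x, (exists2 i, 1 <= i & S i x) <-> 1 <= x <= nint r) /\
  (forall i, 1 <= i -> count (S i) (iota 1 (nint r)) = nth 0 r i).

From Stdlib Require List.
From mathcomp Require Import all_boot zify.
From mathcomp Require Import classical_sets functions cardinality.
Set Implicit Arguments. Unset Strict Implicit. Unset Printing Implicit Defensive.

(* Encode S in V_r as the word whose x-th letter is the d with x in S_d; two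
   such words are permutations of each other, hence related by adjacent
   transpositions, and transposing positions a and a+1 amounts to exchanging the
   roles of the labels a and a+1.  It therefore suffices to give a bijection Phi
   from CF_{r,k,S} onto CF_{r,k,S o tau}, tau = (a a+1).  If no vertex labelled
   a+1 is improper only because of its descendant a, Phi swaps the labels a and
   a+1, which keeps every coloring proper.  Otherwise that vertex X = a+1
   carries a special color, and the vertex Y = a below it is proper, so its color
   points at one of its children T; Phi exchanges the children of X and Y around
   T, so that X gets the degree of Y and Y the degree of X.  In both cases Phi is
   an involution. *)

(* Abstracting the counts first keeps [lia] from looking inside them. *)
Ltac count_lia :=
  repeat match goal with
  | |- context [count ?p ?s] => let n := fresh "n" in set n := count p s; clearbody n
  | |- context [nat_of_bool ?b] => let n := fresh "n" in set n := nat_of_bool b; clearbody n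
  end; lia.

Section NestedInduction.
Variables (A : Type) (P : dtree A -> Prop).
Hypothesis IH : forall a ch, (forall t, List.In t ch -> P t) -> P (DNode a ch).

Fixpoint dtree_ind_in (t : dtree A) : P t :=
  let: DNode a ch := t in
  IH a ((fix all_in (ch : seq (dtree A)) : forall t, List.In t ch -> P t :=
           match ch with
           | [::] => fun t F => match F with end
           | c :: cs => fun t tin => match tin with
                         | or_introl E => eq_ind c P (dtree_ind_in c) t E
                         | or_intror tin' => all_in cs t tin' end
           end) ch).
End NestedInduction.

Lemma eq_map_In (T U : Type) (f g : T -> U) s :
  (forall t, List.In t s -> f t = g t) -> map f s = map g s.
Proof. by elim: s => //= x s IH H; rewrite H ?IH //; [move=> t Ht; apply: H; right | left]. Qed.

Notation vert := (deco * nat * seq nat)%type.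

Definition dlabels (d : deco) : seq nat := if d is Some (l, _) then [:: l] else [::].

Definition info (t : ctree) : vert := let: DNode d ch := t in (d, size ch, labels t).

Lemma labels_node d ch : labels (DNode d ch) = dlabels d ++ flabels ch.
Proof. by case: d => [[]|]. Qed.
Lemma vinfo_node d ch : vinfo (DNode d ch) = info (DNode d ch) :: fverts ch.
Proof. by []. Qed.
Lemma flabels_cat s1 s2 : flabels (s1 ++ s2) = flabels s1 ++ flabels s2.
Proof. by rewrite /flabels map_cat flatten_cat. Qed.
Lemma fverts_cat s1 s2 : fverts (s1 ++ s2) = fverts s1 ++ fverts s2.
Proof. by rewrite /fverts map_cat flatten_cat. Qed.
Lemma flabels_cons t s : flabels (t :: s) = labels t ++ flabels s.
Proof. by []. Qed.
Lemma fverts_cons t s : fverts (t :: s) = vinfo t ++ fverts s.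
Proof. by []. Qed.

Lemma In_flabels t s : List.In t s -> {subset labels t <= flabels s}.
Proof.
elim: s => //= u s IH [-> | /IH sub] x xt; rewrite flabels_cons mem_cat ?xt //.
by rewrite sub ?orbT.
Qed.

(* One-hole contexts: [Ctx d l C r] is a node decorated [d] whose children are
   [l], then the subtree around the hole, then [r]. *)
Inductive ctx := Hole | Ctx of deco & seq ctree & ctx & seq ctree.

Fixpoint plug (C : ctx) (t : ctree) : ctree :=
  if C is Ctx d l C' r then DNode d (l ++ plug C' t :: r) else t.

Fixpoint ctx_labels (C : ctx) : seq nat :=
  if C is Ctx d l C' r then dlabels d ++ flabels l ++ flabels r ++ ctx_labels C'
  else [::].

Fixpoint path_verts (C : ctx) (t : ctree) : seq vert :=
  if C is Ctx d l C' r then (d, size l + (size r).+1, labels (plug C t)) :: path_verts C' t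
  else [::].

Fixpoint side_verts (C : ctx) : seq vert :=
  if C is Ctx d l C' r then fverts l ++ fverts r ++ side_verts C' else [::].

Lemma labels_plug C t : perm_eq (labels (plug C t)) (ctx_labels C ++ labels t).
Proof.
elim: C => [|d l C IH r] //.
rewrite [plug _ _]/= labels_node [ctx_labels _]/= flabels_cat flabels_cons.
by rewrite -catA -catA !perm_cat2l perm_catC -catA perm_cat2l.
Qed.

Lemma vinfo_plug C t :
  perm_eq (vinfo (plug C t)) (path_verts C t ++ side_verts C ++ vinfo t).
Proof.
elim: C => [|d l C IH r] //.
rewrite [plug _ _]/= vinfo_node [path_verts _ _]/= [side_verts _]/= fverts_cat fverts_cons.
rewrite /info /= size_cat /= perm_cons.
by apply/permP => p; move/permP: IH => /(_ p); rewrite !count_cat => ->; lia.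
Qed.

Lemma count_vinfo_plug (p : pred vert) C t :
  count p (vinfo (plug C t)) = count p (path_verts C t) + (count p (side_verts C) + count p (vinfo t)).
Proof. by rewrite (permP (vinfo_plug C t)) !count_cat. Qed.

Lemma count_labels_plug (p : pred nat) C t :
  count p (labels (plug C t)) = count p (ctx_labels C) + count p (labels t).
Proof. by rewrite (permP (labels_plug C t)) !count_cat. Qed.

Lemma mem_labels_plug C t x : (x \in labels (plug C t)) = (x \in ctx_labels C) || (x \in labels t).
Proof. by rewrite (perm_mem (labels_plug C t)) mem_cat. Qed.

Lemma fverts_split (s : seq ctree) v : v \in fverts s ->
  exists l c r, [/\ s = l ++ c :: r, v \in vinfo c & List.In c s].
Proof.
elim: s => //= c s IH; rewrite fverts_cons mem_cat => /orP[vc | /IH[l [c' [r [-> H1 H2]]]]].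
  by exists [::], c, s; split; rewrite //=; left.
by exists (c :: l), c', r; split => //=; right.
Qed.

Lemma flabels_split (s : seq ctree) x : x \in flabels s ->
  exists l c r, [/\ s = l ++ c :: r, x \in labels c & List.In c s].
Proof.
elim: s => //= c s IH; rewrite flabels_cons mem_cat => /orP[xc | /IH[l [c' [r [-> H1 H2]]]]].
  by exists [::], c, s; split; rewrite //=; left.
by exists (c :: l), c', r; split => //=; right.
Qed.

Lemma vinfo_ctx t v : v \in vinfo t -> exists C u, t = plug C u /\ v = info u.
Proof.
elim/dtree_ind_in: t => d ch IH; rewrite vinfo_node in_cons => /orP[/eqP-> | ].
  by exists Hole, (DNode d ch).
case/fverts_split => l [c [r [Ech vc cch]]].
have [C [u [Ec ->]]] := IH c cch vc.
by rewrite Ech Ec; exists (Ctx d l C r), u.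
Qed.

Lemma fverts_ctx F v : v \in fverts F ->
  exists pre C u post, F = pre ++ plug C u :: post /\ v = info u.
Proof.
case/fverts_split => l [c [r [-> vc _]]].
have [C [u [-> ->]]] := vinfo_ctx vc.
by exists l, C, u, r.
Qed.

Lemma labels_ctx t x : x \in labels t ->
  exists C c ch, t = plug C (DNode (Some (x, c)) ch).
Proof.
elim/dtree_ind_in: t => d ch IH; rewrite labels_node mem_cat => /orP[ | ].
  by case: d => [[m c]|] //; rewrite inE => /eqP->; exists Hole, c, ch.
case/flabels_split => l [c [r [Ech xc cch]]].
have [C [c' [ch' Ec]]] := IH c cch xc.
by rewrite Ech Ec; exists (Ctx d l C r), c', ch'.
Qed.

Lemma flabels_ctx F x : x \in flabels F ->
  exists pre C c ch post, F = pre ++ plug C (DNode (Some (x, c)) ch) :: post.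
Proof.
case/flabels_split => l [t [r [-> xt _]]].
have [C [c [ch ->]]] := labels_ctx xt.
by exists l, C, c, ch, r.
Qed.

Lemma count_degree_path_verts C t t' i :
  count (fun v : vert => v.1.2 == i) (path_verts C t) =
  count (fun v : vert => v.1.2 == i) (path_verts C t').
Proof. by elim: C => //= d l C ->. Qed.

Lemma path_verts_labels C t v : v \in path_verts C t -> {subset labels t <= v.2}.
Proof.
elim: C => //= d l C IH r; rewrite in_cons => /orP[/eqP-> x xt | /IH//].
by rewrite /= (mem_labels_plug (Ctx d l C r)) xt orbT.
Qed.

Lemma path_verts_deco C t v : v \in path_verts C t -> {subset dlabels v.1.1 <= ctx_labels C}.
Proof.
elim: C => //= d l C IH r; rewrite in_cons => /orP[/eqP-> x xd | /IH sub x xd].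
  by rewrite /= mem_cat xd.
by rewrite !mem_cat sub ?orbT.
Qed.

Lemma path_verts_perm C t t' v' : v' \in path_verts C t' ->
  exists2 v, v \in path_verts C t &
    v.1 = v'.1 /\ (perm_eq (labels t) (labels t') -> perm_eq v.2 v'.2).
Proof.
elim: C => //= d l C IH r; rewrite in_cons => /orP[/eqP-> | /IH[v vC H]].
  exists (d, size l + (size r).+1, labels (plug (Ctx d l C r) t)); first by rewrite mem_head.
  split=> // tt'; apply: perm_trans (labels_plug (Ctx d l C r) t) _.
  by rewrite perm_sym (permPl (labels_plug (Ctx d l C r) t')) perm_cat2l perm_sym.
by exists v => //; rewrite in_cons vC orbT.
Qed.

Section AdjacentLabels.
Variable a : nat.

Definition tau x := if x == a then a.+1 else if x == a.+1 then a else x.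

Lemma tauK : involutive tau.
Proof.
move=> x; rewrite /tau; case: (eqVneq x a) => [->|xa]; first by rewrite eqxx (gtn_eqF (ltnSn a)).
by case: (eqVneq x a.+1) => [->|xa1]; rewrite ?eqxx // (negPf xa) (negPf xa1).
Qed.

Lemma tau_a : tau a = a.+1. Proof. by rewrite /tau eqxx. Qed.
Lemma tau_a1 : tau a.+1 = a. Proof. by rewrite /tau eqxx (gtn_eqF (ltnSn a)). Qed.
Lemma tau_id x : x != a -> x != a.+1 -> tau x = x.
Proof. by rewrite /tau => /negPf-> /negPf->. Qed.
Lemma tau_lt x : x < a -> tau x = x.
Proof. by move=> h; apply: tau_id; apply/eqP; lia. Qed.

Lemma tau_iota n : 1 <= a < n -> perm_eq (map tau (iota 1 n)) (iota 1 n).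
Proof.
move=> an; apply: uniq_perm; rewrite ?(map_inj_uniq (inv_inj tauK)) ?iota_uniq //.
move=> x; rewrite -{1}(tauK x) (mem_map (inv_inj tauK)) !mem_iota /tau.
by case: (eqVneq x a) => [->|]; [|case: (eqVneq x a.+1) => [->|]]; lia.
Qed.

Definition swap_deco (d : deco) : deco := if d is Some (l, c) then Some (tau l, c) else None.

Fixpoint swap_tree (t : ctree) : ctree :=
  let: DNode d ch := t in DNode (swap_deco d) (map swap_tree ch).

Definition swap_vert (v : vert) : vert := let: (d, n, L) := v in (swap_deco d, n, map tau L).

Definition swap_sets (S : nat -> pred nat) : nat -> pred nat := fun d x => S d (tau x).

Lemma swap_treeK : involutive swap_tree.
Proof.
elim/dtree_ind_in => d ch IH /=.
have -> : swap_deco (swap_deco d) = d by case: d => [[l c]|] //=; rewrite tauK.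
by rewrite -map_comp (eq_map_In IH) map_id.
Qed.

Lemma labels_swap t : labels (swap_tree t) = map tau (labels t).
Proof.
elim/dtree_ind_in: t => d ch IH; rewrite [swap_tree _]/= !labels_node map_cat.
congr (_ ++ _); first by case: d => [[]|].
by rewrite /flabels -map_comp (eq_map_In IH) map_comp map_flatten.
Qed.

Lemma vinfo_swap t : vinfo (swap_tree t) = map swap_vert (vinfo t).
Proof.
elim/dtree_ind_in: t => d ch IH; rewrite [swap_tree _]/= !vinfo_node map_cons.
congr (_ :: _); first by rewrite /info /= size_map -(labels_swap (DNode d ch)).
by rewrite /fverts -map_comp (eq_map_In IH) map_comp map_flatten.
Qed.

Lemma flabels_swap F : flabels (map swap_tree F) = map tau (flabels F).
Proof. by rewrite /flabels -map_comp (eq_map labels_swap) map_comp map_flatten. Qed.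

Lemma fverts_swap F : fverts (map swap_tree F) = map swap_vert (fverts F).
Proof. by rewrite /fverts -map_comp (eq_map vinfo_swap) map_comp map_flatten. Qed.

(* The vertex labelled [a.+1] carries a special color and [a] is its only
   smaller internal descendant: swapping the labels [a] and [a.+1] would make it
   proper, so such a vertex needs the exchange defined below instead. *)
Definition critical (v : vert) : bool :=
  let: (d, _, L) := v in
  [&& (if d is Some (l, Spc _) then l == a.+1 else false), a \in L & proper_info a L].

Lemma critical_deco v : critical v -> exists s, v.1.1 = Some (a.+1, Spc s).
Proof. by case: v => [[[[l [|s]]|] n] L] //= /and3P[/eqP-> _ _]; exists s. Qed.

Lemma vertex_ok_swap k S v :
  vertex_ok k S v -> ~~ critical v -> vertex_ok k (swap_sets S) (swap_vert v).
Proof.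
case: v => [[[[l c]|] n] L] //= [n_gt0 [cok Sl]] ncrit.
split=> //; split; last by rewrite /swap_sets tauK.
case: c cok ncrit => // j [/allPn[m mL ml] jk] ncrit; split=> //; apply/allPn.
have [la1|la1] := eqVneq l a.+1.
  move: ml ncrit; rewrite la1 /= => ml; have [aL|/allPn[m' m'L m'a]] := boolP (proper_info a L).
    have ma : m = a by have := allP aL m mL; lia.
    have aL' : a \in L by rewrite -ma.
    by rewrite eqxx aL'.
  by move=> _; exists (tau m'); rewrite ?map_f // tau_a1 tau_lt //; lia.
exists (tau m); rewrite ?map_f //; have [la|la] := eqVneq l a.
  by rewrite la tau_a tau_lt //; lia.
rewrite (tau_id la la1) /tau; have [ma|nma] := eqVneq m a; first by lia.
by have [ma1|//] := eqVneq m a.+1; lia.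
Qed.

Lemma swap_vert_not_critical k S v : vertex_ok k S v -> ~~ critical (swap_vert v).
Proof.
case: v => [[[[l [i|j]]|] n] L] //= [_ [[/allPn[m mL ml] _] _]].
apply/and3P => -[/eqP la1 _ /allP aL].
have la : l = a by rewrite -(tauK l) la1 tau_a1.
by have := aL (tau m) (map_f _ mL); rewrite tau_lt; lia.
Qed.

Lemma CF_swap r k S F : 1 <= a < nint r -> CF r k S F -> ~~ has critical (fverts F) ->
  CF r k (swap_sets S) (map swap_tree F).
Proof.
move=> an [type [lab ok]] /hasPn ncrit; rewrite /CF fverts_swap flabels_swap.
split; first by move=> i; rewrite count_map -type; apply: eq_count => -[[]].
split; first exact: perm_trans (perm_map _ lab) (tau_iota an).
by move=> _ /mapP[v vF ->]; apply: vertex_ok_swap (ok v vF) (ncrit v vF).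
Qed.

Lemma swap_not_critical r k S F : CF r k S F -> ~~ has critical (fverts (map swap_tree F)).
Proof.
case=> _ [_ ok]; rewrite fverts_swap; apply/hasPn => _ /mapP[v vF ->].
exact: swap_vert_not_critical (ok v vF).
Qed.

Definition leaf : ctree := DNode None [::].

Fixpoint find_node (t : ctree) : option (deco * seq ctree) :=
  let: DNode d ch := t in
  if a \in dlabels d then Some (d, ch)
  else foldr (fun c res => if find_node c is Some n then Some n else res) None ch.

Fixpoint replace_node (w t : ctree) : ctree :=
  let: DNode d ch := t in
  if a \in dlabels d then w else DNode d (map (replace_node w) ch).

(* The critical vertex X = [a.+1] has the vertex Y = [a] inside its [q]-th child G,
   and Y, being proper, carries an ordinary color [c] pointing at its child T.  X and
   Y exchange their lists of children, except that G (with Y inside) replaces T among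
   the children of X and T replaces G among those of Y, which is recolored [q.+1]. *)
Definition exchange (t : ctree) : ctree :=
  let: DNode d xs := t in
  let q := find (fun u => a \in labels u) xs in
  let G := nth leaf xs q in
  if find_node G is Some (Some (_, Col c), ys) then
    DNode d (set_nth leaf ys c.-1
      (replace_node (DNode (Some (a, Col q.+1)) (set_nth leaf xs q (nth leaf ys c.-1))) G))
  else t.

Fixpoint exchange_tree (t : ctree) : ctree :=
  let: DNode d ch := t in
  if critical (info (DNode d ch)) then exchange (DNode d ch) else DNode d (map exchange_tree ch).

Definition Phi (F : cforest) : cforest :=
  if has critical (fverts F) then map exchange_tree F else map swap_tree F.

Lemma notin_labels_node x d ch :
  x \notin labels (DNode d ch) -> x \notin dlabels d /\ forall t, List.In t ch -> x \notin labels t.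
Proof.
rewrite labels_node mem_cat negb_or => /andP[xd xch]; split=> // t tch.
by apply: contra xch; apply: In_flabels.
Qed.

Lemma notin_flabels_cons t s x :
  x \notin flabels (t :: s) -> x \notin labels t /\ x \notin flabels s.
Proof. by rewrite flabels_cons mem_cat negb_or => /andP. Qed.

Lemma find_node_nil t : a \notin labels t -> find_node t = None.
Proof.
elim/dtree_ind_in: t => d ch IH /notin_labels_node[/negPf/= -> ach].
by elim: ch IH ach => //= c ch IHch IH ach; rewrite IH ?IHch; auto.
Qed.

Lemma find_node_plug C t : a \notin ctx_labels C -> find_node (plug C t) = find_node t.
Proof.
elim: C => //= d l C IH r; rewrite !mem_cat !negb_or => /and4P[ad al ar aC].
rewrite (negPf ad) foldr_cat /= IH //.
have foldr_nil s z : a \notin flabels s ->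
    foldr (fun c res => if find_node c is Some n then Some n else res) z s = z.
  by elim: s => //= c s IHs /notin_flabels_cons[ac as_]; rewrite find_node_nil // IHs.
by rewrite foldr_nil //; case: (find_node t) => //; rewrite foldr_nil.
Qed.

Lemma replace_node_nil w t : a \notin labels t -> replace_node w t = t.
Proof.
elim/dtree_ind_in: t => d ch IH /notin_labels_node[/negPf/= -> ach].
by rewrite (eq_map_In (g := id)) ?map_id // => t tch; apply: IH (ach t tch).
Qed.

Lemma map_replace_node_nil w s : a \notin flabels s -> map (replace_node w) s = s.
Proof. by elim: s => //= t s IH /notin_flabels_cons[at_ as_]; rewrite replace_node_nil // IH. Qed.

Lemma replace_node_plug w C t :
  a \notin ctx_labels C -> replace_node w (plug C t) = plug C (replace_node w t).
Proof.
elim: C => //= d l C IH r; rewrite !mem_cat !negb_or => /and4P[ad al ar aC].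
by rewrite (negPf ad) map_cat /= IH // !map_replace_node_nil.
Qed.

Lemma exchange_treeE d ch : exchange_tree (DNode d ch) =
  if critical (info (DNode d ch)) then exchange (DNode d ch) else DNode d (map exchange_tree ch).
Proof. by []. Qed.

Lemma exchange_tree_node d ch : a.+1 \notin dlabels d ->
  exchange_tree (DNode d ch) = DNode d (map exchange_tree ch).
Proof.
move=> a1d; rewrite exchange_treeE ifF //; apply/negP => /critical_deco[s ds].
by move: a1d; rewrite /= in ds; rewrite ds mem_head.
Qed.

Lemma exchange_tree_nil t : a.+1 \notin labels t -> exchange_tree t = t.
Proof.
elim/dtree_ind_in: t => d ch IH /notin_labels_node[a1d a1ch].
by rewrite exchange_tree_node // (eq_map_In (g := id)) ?map_id // => u uch; apply: IH (a1ch u uch).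
Qed.

Lemma map_exchange_tree_nil s : a.+1 \notin flabels s -> map exchange_tree s = s.
Proof. by elim: s => //= t s IH /notin_flabels_cons[at_ as_]; rewrite exchange_tree_nil // IH. Qed.

Lemma exchange_tree_plug C t :
  a.+1 \notin ctx_labels C -> exchange_tree (plug C t) = plug C (exchange_tree t).
Proof.
elim: C => // d l C IH r; rewrite [ctx_labels _]/= !mem_cat !negb_or => /and4P[a1d a1l a1r a1C].
by rewrite [plug _ _]/= exchange_tree_node // map_cat /= IH // !map_exchange_tree_nil.
Qed.

Lemma exchange_tree_critical t : critical (info t) -> exchange_tree t = exchange t.
Proof. by case: t => d ch crit; rewrite exchange_treeE crit. Qed.

Lemma has_labels x (s : seq ctree) : has (fun u => x \in labels u) s = (x \in flabels s).
Proof. by elim: s => //= t s ->; rewrite flabels_cons mem_cat. Qed.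

Lemma set_nth_cat_size (T : Type) (x0 : T) s1 y s2 z :
  set_nth x0 (s1 ++ y :: s2) (size s1) z = s1 ++ z :: s2.
Proof. by elim: s1 => //= x s1 ->. Qed.

Lemma nth_cat_size (T : Type) (x0 : T) s1 y s2 : nth x0 (s1 ++ y :: s2) (size s1) = y.
Proof. by elim: s1. Qed.

Definition lower_node (l : seq ctree) (T : ctree) (r : seq ctree) : ctree :=
  DNode (Some (a, Col (size l).+1)) (l ++ T :: r).

Definition pair_node s xl C yl T yr xr : ctree :=
  DNode (Some (a.+1, Spc s)) (xl ++ plug C (lower_node yl T yr) :: xr).

Definition pair_forest pre C1 s xl C yl T yr xr post : cforest :=
  pre ++ plug C1 (pair_node s xl C yl T yr xr) :: post.

Lemma exchange_pair_node s xl C yl T yr xr :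
  a \notin flabels xl -> a \notin ctx_labels C ->
  exchange (pair_node s xl C yl T yr xr) = pair_node s yl C xl T xr yr.
Proof.
move=> axl aC; rewrite /pair_node /lower_node /exchange find_cat has_labels (negPf axl) /=.
rewrite mem_labels_plug labels_node mem_cat mem_head orbT addn0 !nth_cat_size.
rewrite find_node_plug //= mem_head nth_cat_size !set_nth_cat_size replace_node_plug //=.
by rewrite mem_head.
Qed.

Definition other_labels pre C1 xl C yl T yr xr post : seq nat :=
  flabels pre ++ ctx_labels C1 ++ flabels post ++ flabels xl ++ flabels xr ++ ctx_labels C
  ++ flabels yl ++ labels T ++ flabels yr.

Definition other_verts pre C1 xl C yl T yr xr post : seq vert :=
  fverts pre ++ side_verts C1 ++ fverts post ++ fverts xl ++ fverts xr ++ side_verts C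
  ++ fverts yl ++ vinfo T ++ fverts yr.

Lemma other_labels_exchange pre C1 xl C yl T yr xr post :
  perm_eq (other_labels pre C1 yl C xl T xr yr post) (other_labels pre C1 xl C yl T yr xr post).
Proof. by apply/permP => p; rewrite !count_cat; lia. Qed.

Lemma other_verts_exchange pre C1 xl C yl T yr xr post :
  perm_eq (other_verts pre C1 yl C xl T xr yr post) (other_verts pre C1 xl C yl T yr xr post).
Proof. by apply/permP => p; rewrite !count_cat; lia. Qed.

Lemma labels_pair_node s xl C yl T yr xr :
  perm_eq (labels (pair_node s xl C yl T yr xr))
    (a.+1 :: a :: flabels xl ++ flabels xr ++ ctx_labels C ++ flabels yl ++ labels T ++ flabels yr).
Proof.
apply/permP => p; rewrite labels_node flabels_cat flabels_cons !count_cat count_labels_plug.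
by rewrite labels_node flabels_cat flabels_cons /= !count_cat; lia.
Qed.

Lemma labels_pair_node_exchange s xl C yl T yr xr :
  perm_eq (labels (pair_node s yl C xl T xr yr)) (labels (pair_node s xl C yl T yr xr)).
Proof.
rewrite (permPl (labels_pair_node _ _ _ _ _ _ _)) (permPr (labels_pair_node _ _ _ _ _ _ _)).
by rewrite !perm_cons; apply/permP => p; rewrite !count_cat; lia.
Qed.

Lemma flabels_pair_forest pre C1 s xl C yl T yr xr post :
  perm_eq (flabels (pair_forest pre C1 s xl C yl T yr xr post))
    (a.+1 :: a :: other_labels pre C1 xl C yl T yr xr post).
Proof.
apply/permP => p; move/permP: (labels_pair_node s xl C yl T yr xr) => /(_ p) lab.
rewrite flabels_cat flabels_cons !count_cat count_labels_plug lab /= !count_cat; lia.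
Qed.

Lemma fverts_pair_forest pre C1 s xl C yl T yr xr post :
  perm_eq (fverts (pair_forest pre C1 s xl C yl T yr xr post))
    (info (pair_node s xl C yl T yr xr) :: info (lower_node yl T yr) ::
     path_verts C1 (pair_node s xl C yl T yr xr) ++ path_verts C (lower_node yl T yr)
     ++ other_verts pre C1 xl C yl T yr xr post).
Proof.
rewrite /pair_forest /pair_node /lower_node /other_verts.
apply/permP => p; rewrite fverts_cat fverts_cons !count_cat count_vinfo_plug.
rewrite vinfo_node /= fverts_cat fverts_cons !count_cat count_vinfo_plug.
by rewrite vinfo_node /= fverts_cat fverts_cons !count_cat /=; count_lia.
Qed.

Lemma mem_fverts_mid l t r : {subset vinfo t <= fverts (l ++ t :: r)}.
Proof. by move=> v vt; rewrite fverts_cat fverts_cons !mem_cat vt orbT. Qed.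

Lemma mem_vinfo_plug C t : {subset vinfo t <= vinfo (plug C t)}.
Proof. by move=> v vt; rewrite (perm_mem (vinfo_plug C t)) !mem_cat vt !orbT. Qed.

Lemma proper_vertex_color k S l c n L : vertex_ok k S (Some (l, c), n, L) ->
  proper_info l L -> exists2 i, c = Col i & 0 < i <= n.
Proof. by case: c => [i|j] /= [_ [cok _]] prop; [exists i | rewrite prop in cok; case: cok]. Qed.

Lemma split_at (T : Type) (x0 : T) (s : seq T) c : 0 < c <= size s ->
  exists l y r, s = l ++ y :: r /\ (size l).+1 = c.
Proof.
case/andP => c_gt0 cs; exists (take c.-1 s), (nth x0 s c.-1), (drop c s).
rewrite size_takel; last by lia.
by rewrite -{3}(prednK c_gt0) -drop_nth ?cat_take_drop ?prednK //; lia.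
Qed.

Lemma critical_pair_forest r k S F : CF r k S F -> has critical (fverts F) ->
  exists pre C1 s xl C yl T yr xr post,
    F = pair_forest pre C1 s xl C yl T yr xr post
    /\ proper_info a (labels (pair_node s xl C yl T yr xr)).
Proof.
case=> _ [_ ok] /hasP[v vF crit].
have [pre [C1 [[d xs] [post [EF Ev]]]]] := fverts_ctx vF; subst v.
have [s /= Ed] := critical_deco crit; subst d.
case/and3P: crit => _ aX propX.
have axs : a \in flabels xs by move: aX; rewrite /= in_cons (ltn_eqF (ltnSn a)).
have [xl [C [c [ys [xr Exs]]]]] := flabels_ctx axs; subst xs.
set X := DNode _ _ in EF propX; set Y := DNode _ ys in X EF propX.
have YF : info Y \in fverts F.
  rewrite EF; apply/mem_fverts_mid/mem_vinfo_plug; rewrite /X vinfo_node in_cons.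
  by apply/orP; right; apply/mem_fverts_mid/mem_vinfo_plug; rewrite vinfo_node mem_head.
have propY : proper_info a (labels Y).
  apply/allP => m mY; apply: (allP propX); rewrite /X labels_node mem_cat flabels_cat.
  by rewrite flabels_cons !mem_cat mem_labels_plug mY !orbT.
have [i Ec ci] := proper_vertex_color (ok _ YF) propY; subst c.
have [yl [T [yr [Eys Ei]]]] := split_at leaf ci; subst ys.
exists pre, C1, s, xl, C, yl, T, yr, xr, post.
by rewrite /pair_forest /pair_node /lower_node Ei.
Qed.

Lemma critical_node d ch : critical (info (DNode d ch)) =
  [&& (if d is Some (l, Spc _) then l == a.+1 else false), a \in labels (DNode d ch)
    & proper_info a (labels (DNode d ch))].
Proof. by []. Qed.

Lemma Phi_pair_forest pre C1 s xl C yl T yr xr post :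
  a.+1 \notin flabels pre -> a.+1 \notin ctx_labels C1 -> a.+1 \notin flabels post ->
  a \notin flabels xl -> a \notin ctx_labels C ->
  proper_info a (labels (pair_node s xl C yl T yr xr)) ->
  Phi (pair_forest pre C1 s xl C yl T yr xr post) = pair_forest pre C1 s yl C xl T xr yr post.
Proof.
move=> a1pre a1C1 a1post axl aC prop.
have crit : critical (info (pair_node s xl C yl T yr xr)).
  rewrite [critical _]critical_node eqxx prop andbT.
  by rewrite (perm_mem (labels_pair_node _ _ _ _ _ _ _)) !inE eqxx orbT.
rewrite /Phi ifT; last first.
  apply/hasP; exists (info (pair_node s xl C yl T yr xr)) => //.
  by rewrite (perm_mem (fverts_pair_forest _ _ _ _ _ _ _ _ _ _)) mem_head.
rewrite /pair_forest map_cat /= !map_exchange_tree_nil // exchange_tree_plug //.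
by rewrite exchange_tree_critical // exchange_pair_node.
Qed.

Lemma vertex_ok_eq_proper k S (v v' : vert) : v.1 = v'.1 ->
  (forall l c, v.1.1 = Some (l, c) -> proper_info l v.2 = proper_info l v'.2) ->
  vertex_ok k S v -> vertex_ok k S v'.
Proof.
case: v v' => [[d n] L] [[d' n'] L'] /= [<- <-] prop.
by case: d prop => [[l [i|j]]|] //= prop [n_gt0 [[nprop jk] Sl]]; rewrite -(prop l (Spc j)).
Qed.

Lemma vertex_ok_swap_sets k S (v : vert) :
  a \notin dlabels v.1.1 -> a.+1 \notin dlabels v.1.1 ->
  vertex_ok k S v -> vertex_ok k (swap_sets S) v.
Proof.
case: v => [[[[l c]|] n] L] //=; rewrite !inE => al a1l [n_gt0 [cok Sl]].
by rewrite /swap_sets tau_id // eq_sym.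
Qed.

Lemma vinfo_deco t v : v \in vinfo t -> {subset dlabels v.1.1 <= labels t}.
Proof.
case/vinfo_ctx => C [[d ch] [-> ->]] x /= xd.
by rewrite mem_labels_plug labels_node mem_cat xd orbT.
Qed.

Lemma fverts_deco F v : v \in fverts F -> {subset dlabels v.1.1 <= flabels F}.
Proof.
case/fverts_split => l [t [r [-> vt _]]] x /(vinfo_deco vt) xt.
by rewrite flabels_cat flabels_cons !mem_cat xt orbT.
Qed.

Lemma side_verts_deco C v : v \in side_verts C -> {subset dlabels v.1.1 <= ctx_labels C}.
Proof.
elim: C => //= d l C IH r; rewrite !mem_cat => /or3P[vl | vr | vC] x xv; rewrite !mem_cat.
- by rewrite (fverts_deco vl xv) orbT.
- by rewrite (fverts_deco vr xv) !orbT.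
- by rewrite (IH vC x xv) !orbT.
Qed.

Lemma other_verts_deco pre C1 xl C yl T yr xr post v :
  v \in other_verts pre C1 xl C yl T yr xr post ->
  {subset dlabels v.1.1 <= other_labels pre C1 xl C yl T yr xr post}.
Proof.
rewrite /other_verts /other_labels !mem_cat => vV x xv; rewrite !mem_cat.
by repeat case/orP: vV => [vV|vV];
  rewrite ?(fverts_deco vV xv) ?(side_verts_deco vV xv) ?(vinfo_deco vV xv) ?orbT.
Qed.

Section Exchange.
Variables (r : seq nat) (k : nat) (S : nat -> pred nat).
Variables (pre post xl xr yl yr : seq ctree) (C1 C : ctx) (s : nat) (T : ctree).

Local Notation F := (pair_forest pre C1 s xl C yl T yr xr post).
Local Notation F' := (pair_forest pre C1 s yl C xl T xr yr post).
Local Notation X := (pair_node s xl C yl T yr xr).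
Local Notation X' := (pair_node s yl C xl T xr yr).
Local Notation Y := (lower_node yl T yr).
Local Notation W := (lower_node xl T xr).
Local Notation others := (other_labels pre C1 xl C yl T yr xr post).

Hypothesis F_CF : CF r k S F.
Hypothesis X_proper : proper_info a (labels X).

Lemma flabels_exchange : perm_eq (flabels F') (flabels F).
Proof.
rewrite (permPl (flabels_pair_forest _ _ _ _ _ _ _ _ _ _)).
by rewrite (permPr (flabels_pair_forest _ _ _ _ _ _ _ _ _ _)) !perm_cons other_labels_exchange.
Qed.

Lemma others_fresh : a.+1 \notin others /\ a \notin others.
Proof.
have [_ [lab _]] := F_CF.
have := iota_uniq 1 (nint r); rewrite -(perm_uniq lab) (perm_uniq (flabels_pair_forest _ _ _ _ _ _ _ _ _ _)).
by rewrite /= inE negb_or => /and3P[/andP[_ ->] -> _].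
Qed.

Lemma Phi_exchange : Phi F = F' /\ Phi F' = F.
Proof.
have [a1o ao] := others_fresh; move: a1o ao; rewrite /other_labels !mem_cat !negb_or.
move=> /and4P[a1pre a1C1 a1post _] /and4P[_ _ _ /and4P[axl axr aC /and3P[ayl _ ayr]]].
split; apply: Phi_pair_forest => //.
by move: X_proper; rewrite /proper_info (perm_all _ (labels_pair_node_exchange _ _ _ _ _ _ _)).
Qed.

Lemma degrees_exchange i :
  count (fun v : vert => v.1.2 == i) (fverts F') = count (fun v : vert => v.1.2 == i) (fverts F).
Proof.
rewrite (permP (fverts_pair_forest _ _ _ _ _ _ _ _ _ _)).
rewrite (permP (fverts_pair_forest _ _ _ _ _ _ _ _ _ _)) /= !count_cat.
rewrite (count_degree_path_verts C1 X' X) (count_degree_path_verts C W Y).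
by rewrite !size_cat /= !addnS; count_lia.
Qed.

Lemma vertex_ok_F v :
  v \in info X :: info Y :: path_verts C1 X ++ path_verts C Y
          ++ other_verts pre C1 xl C yl T yr xr post ->
  vertex_ok k S v.
Proof.
have [_ [_ ok]] := F_CF; move=> vF; apply: ok.
by rewrite (perm_mem (fverts_pair_forest _ _ _ _ _ _ _ _ _ _)).
Qed.

Lemma vertex_ok_top : vertex_ok k (swap_sets S) (info X').
Proof.
have [_ [[_ sk] _]] := vertex_ok_F (mem_head _ _).
have [_ [_ SY]] : vertex_ok k S (info Y) by apply: vertex_ok_F; rewrite !inE eqxx orbT.
split; first by rewrite size_cat addnS.
split; last by move: SY; rewrite /swap_sets tau_a1 !size_cat /= !addnS.
split=> //; apply/allPn; exists a; last by rewrite -ltnNge.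
by rewrite (perm_mem (labels_pair_node _ _ _ _ _ _ _)) !inE eqxx orbT.
Qed.

Lemma vertex_ok_lower : vertex_ok k (swap_sets S) (info W).
Proof.
have [_ [_ SX]] := vertex_ok_F (mem_head _ _).
split; first by rewrite size_cat addnS.
split; last by move: SX; rewrite /swap_sets tau_a !size_cat /= !addnS.
by rewrite size_cat /= addnS ltnS leq_addr.
Qed.

Lemma vertex_ok_swap_others v : {subset dlabels v.1.1 <= others} ->
  vertex_ok k S v -> vertex_ok k (swap_sets S) v.
Proof.
have [a1o ao] := others_fresh.
by move=> sub; apply: vertex_ok_swap_sets; apply: contraNN (sub _) _.
Qed.

Lemma ctx_labels_others : {subset ctx_labels C1 ++ ctx_labels C <= others}.
Proof. by move=> x; rewrite /other_labels !mem_cat => /orP[] ->; rewrite ?orbT. Qed.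

Lemma vertex_ok_path_top v : v \in path_verts C1 X' -> vertex_ok k (swap_sets S) v.
Proof.
case/(path_verts_perm X) => v0 v0P [e1 e2].
apply: vertex_ok_eq_proper e1 _ (vertex_ok_swap_others _ (vertex_ok_F _)).
- move=> l c _; apply: perm_all; apply: e2.
  exact: labels_pair_node_exchange s yl C xl T xr yr.
- by move=> x /(path_verts_deco v0P) xC1; apply: ctx_labels_others; rewrite mem_cat xC1.
- by rewrite !inE mem_cat v0P !orbT.
Qed.

Lemma vertex_ok_path_lower v : v \in path_verts C W -> vertex_ok k (swap_sets S) v.
Proof.
move=> vP; have [v0 v0P [e1 _]] := path_verts_perm Y vP.
have v0C : {subset dlabels v0.1.1 <= ctx_labels C} := path_verts_deco v0P.
apply: vertex_ok_eq_proper e1 _ (vertex_ok_swap_others _ (vertex_ok_F _)).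
- move=> l c v0l; have lC : l \in ctx_labels C by rewrite v0C // v0l mem_head.
  have [_ ao] := others_fresh.
  have a_lt_l : a < l.
    have : a <= l by apply: (allP X_proper); rewrite /pair_node labels_node mem_cat flabels_cat
      flabels_cons !mem_cat mem_labels_plug lC !orbT.
    rewrite leq_eqVlt => /orP[/eqP al|//]; move: ao; rewrite al.
    by move/negP; case; apply: ctx_labels_others; rewrite mem_cat lC orbT.
  (* [a] lies below both [v0] and [v], so both are improper. *)
  have improper (L : seq nat) : a \in L -> proper_info l L = false.
    by move=> aL; apply/negbTE/allPn; exists a; rewrite // -ltnNge.
  by rewrite !improper // ?(path_verts_labels vP) ?(path_verts_labels v0P) // mem_head.
- by move=> x /v0C xC; apply: ctx_labels_others; rewrite mem_cat xC orbT.
- by rewrite !inE !mem_cat v0P !orbT.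
Qed.

Lemma vertex_ok_others v : v \in other_verts pre C1 yl C xl T xr yr post ->
  vertex_ok k (swap_sets S) v.
Proof.
rewrite (perm_mem (other_verts_exchange _ _ _ _ _ _ _ _ _)) => vO.
apply: vertex_ok_swap_others (other_verts_deco vO) (vertex_ok_F _).
by move: vO; rewrite !in_cons /other_verts !mem_cat => ->; rewrite !orbT.
Qed.

Lemma CF_exchange : CF r k (swap_sets S) F'.
Proof.
have [type [lab _]] := F_CF.
split; first by move=> i; rewrite degrees_exchange.
split; first by rewrite (permPl flabels_exchange).
move=> v; rewrite (perm_mem (fverts_pair_forest _ _ _ _ _ _ _ _ _ _)) !in_cons.
case/or3P => [/eqP-> | /eqP-> | ]; [exact: vertex_ok_top | exact: vertex_ok_lower |].
rewrite mem_cat => /orP[|]; first exact: vertex_ok_path_top.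
rewrite mem_cat => /orP[|]; first exact: vertex_ok_path_lower.
exact: vertex_ok_others.
Qed.

End Exchange.

Lemma Phi_CF r k S F : 1 <= a < nint r -> CF r k S F ->
  CF r k (swap_sets S) (Phi F) /\ Phi (Phi F) = F.
Proof.
move=> an FCF; have [crit|ncrit] := boolP (has critical (fverts F)).
  have [pre [C1 [s [xl [C [yl [T [yr [xr [post [EF prop]]]]]]]]]]] := critical_pair_forest FCF crit.
  rewrite EF in FCF *; have [-> ->] := Phi_exchange FCF prop.
  by split=> //; apply: CF_exchange.
rewrite /Phi (negPf ncrit) (negPf (swap_not_critical FCF)).
by rewrite -map_comp (eq_map swap_treeK) map_id; split=> //; apply: CF_swap.
Qed.

End AdjacentLabels.

Local Open Scope classical_set_scope.
Local Open Scope card_scope.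

Lemma CF_ext r k S S' F : (forall d x, 0 < d -> S d x = S' d x) ->
  CF r k S F -> CF r k S' F.
Proof.
move=> SS' [type [lab ok]]; split=> //; split=> // v vF.
by have := ok v vF; case: v vF => [[[[l c]|] n] L] //= _ [n_gt0 [cok Sl]]; rewrite -SS'.
Qed.

Lemma CF_eq_sets r k S S' : (forall d x, 0 < d -> S d x = S' d x) ->
  [set F | CF r k S F] = [set F | CF r k S' F].
Proof.
by move=> SS'; apply/seteqP; split=> F; apply: CF_ext => d x d_gt0; rewrite SS'.
Qed.

Lemma card_CF_swap_sets r k S a : 1 <= a < nint r ->
  [set F | CF r k S F] #= [set F | CF r k (swap_sets a S) F].
Proof.
move=> an; have [f] : $|{bij [set F | CF r k S F] >-> [set F | CF r k (swap_sets a S) F]}|.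
  apply/bijPex; exists (Phi a); split.
  - by move=> F /(Phi_CF an)[].
  - by move=> F G; rewrite !inE => /(Phi_CF an)[_ FF] /(Phi_CF an)[_ GG] E; rewrite -FF E GG.
  - move=> G /= /(Phi_CF an)[G'CF GG]; exists (Phi a G) => //.
    by apply: CF_ext G'CF => d x _; rewrite /swap_sets tauK.
exact: pcard_eq f.
Qed.

Definition word_sets (w : seq nat) : nat -> pred nat :=
  fun d x => (1 <= x <= size w) && (nth 0 w x.-1 == d).

Definition swap_at (i : nat) (s : seq nat) : seq nat :=
  set_nth 0 (set_nth 0 s i (nth 0 s i.+1)) i.+1 (nth 0 s i).

Lemma size_swap_at i s : i.+1 < size s -> size (swap_at i s) = size s.
Proof. by move=> h; rewrite /swap_at !size_set_nth; lia. Qed.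

Lemma word_sets_swap_at w i d x : i.+1 < size w ->
  word_sets (swap_at i w) d x = swap_sets i.+1 (word_sets w) d x.
Proof.
move=> iw; rewrite /word_sets /swap_sets size_swap_at // /swap_at !nth_set_nth /= /tau.
have [->|x_i1] /= := eqVneq x i.+1.
  by rewrite (ltn_eqF (ltnSn i)) nth_set_nth /= eqxx iw (ltnW iw).
have [->|x_i2] /= := eqVneq x i.+2; first by rewrite eqxx iw (ltnW iw).
rewrite ifF; last by apply/eqP; move/eqP: x_i2; lia.
rewrite nth_set_nth /=; have [x_i|//] := eqVneq x.-1 i.
by have -> : x = 0 by move/eqP: x_i1; lia.
Qed.

Inductive adj_perm : seq nat -> seq nat -> Prop :=
| adj_refl s : adj_perm s s
| adj_step i s t : i.+1 < size s -> adj_perm (swap_at i s) t -> adj_perm s t.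

Lemma adj_perm_trans s t u : adj_perm s t -> adj_perm t u -> adj_perm s u.
Proof. by elim=> // i s' t' h _ IH /IH; apply: adj_step. Qed.

Lemma adj_perm_cons x s t : adj_perm s t -> adj_perm (x :: s) (x :: t).
Proof. by elim=> [s'|i s' t' h _ IH]; [exact: adj_refl | apply: (@adj_step i.+1)]. Qed.

Lemma adj_perm_move x u v : adj_perm (x :: u ++ v) (u ++ x :: v).
Proof.
elim: u => [|y u IH] /=; first exact: adj_refl.
by apply: (@adj_step 0) => //=; apply: adj_perm_cons.
Qed.

Lemma perm_adj_perm s t : perm_eq s t -> adj_perm s t.
Proof.
elim: s t => [|x s IH] t; first by move=> /perm_size; case: t => // _; apply: adj_refl.
move=> st; have xt : x \in t by rewrite -(perm_mem st) mem_head.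
case: (splitPr xt) st => u v st; apply: adj_perm_trans (adj_perm_move x u v).
apply/adj_perm_cons/IH; rewrite -(perm_cons x); apply: perm_trans st _.
by rewrite -cat1s perm_catCA.
Qed.

Lemma card_CF_adj_perm r k s t : adj_perm s t -> size s = nint r ->
  [set F | CF r k (word_sets s) F] #= [set F | CF r k (word_sets t) F].
Proof.
elim=> [s'|i s' t' iw _ IH] sr; first exact: card_eqxx.
apply: card_eq_trans (card_CF_swap_sets k (word_sets s') (a := i.+1) _) _; first by rewrite -sr; lia.
rewrite -(CF_eq_sets _ _ (S := word_sets (swap_at i s'))) => [|d x _]; last exact: word_sets_swap_at.
by apply: IH; rewrite size_swap_at.
Qed.

Lemma seq_choice (P : nat -> nat -> Prop) (s : seq nat) :
  (forall x, x \in s -> exists i, P x i) ->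
  exists w, size w = size s /\ forall j, j < size s -> P (nth 0 s j) (nth 0 w j).
Proof.
elim: s => [|x s IH] H; first by exists [::].
have [i Pxi] := H x (mem_head _ _).
have [w [sw Pw]] := IH (fun y ys => H y (mem_behead (s := x :: s) ys)).
by exists (i :: w); split=> [/=|[|j] js //=]; [rewrite sw | apply: Pw].
Qed.

Lemma inV_word_sets r S : inV r S -> exists w, [/\ size w = nint r,
  forall d x, 0 < d -> S d x = word_sets w d x &
  forall d, count_mem d w = (if d == 0 then 0 else nth 0 r d)].
Proof.
case=> disj [cover card].
have pick x : x \in iota 1 (nint r) -> exists i, 0 < i /\ S i x.
  rewrite mem_iota => xn; have /(cover x)[i i_gt0 Six] : 1 <= x <= nint r by lia.
  by exists i.
have [w [sw Pw]] := seq_choice pick; rewrite size_iota in sw Pw.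
have letter x : 1 <= x <= nint r -> 0 < nth 0 w x.-1 /\ S (nth 0 w x.-1) x.
  move=> xn; have := Pw x.-1; rewrite nth_iota; last by lia.
  by rewrite add1n prednK; [apply; lia | lia].
have Sw d x : 0 < d -> S d x = word_sets w d x.
  move=> d_gt0; rewrite /word_sets sw; have [xn|xn] /= := boolP (1 <= x <= nint r).
    have [l_gt0 Slx] := letter x xn; have [<-|ld] := eqVneq (nth 0 w x.-1) d; first by rewrite Slx.
    by apply/negbTE; have := disj d _ x d_gt0 l_gt0; rewrite eq_sym ld Slx andbT; apply.
  by apply/negP => Sdx; move: xn; rewrite ((cover x).1 (ex_intro2 _ _ d d_gt0 Sdx)).
exists w; split=> // d.
have w_letters : w = map (fun x => nth 0 w x.-1) (iota 1 (nint r)).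
  rewrite -(addn0 1) iotaDl -map_comp -{1}(mkseq_nth 0 w) /mkseq sw.
  by apply: eq_map => j /=; rewrite add0n.
rewrite {1}w_letters count_map; have [->|d_gt0] := eqVneq d 0.
  rewrite -[RHS](count_pred0 (iota 1 (nint r))); apply: eq_in_count => x; rewrite mem_iota => xn /=.
  by have [l_gt0 _] := letter x ltac:(lia); apply/eqP; lia.
rewrite -card; last by lia.
apply: eq_in_count => x; rewrite mem_iota => xn /=.
by rewrite Sw; [rewrite /word_sets sw; have -> : 1 <= x <= nint r by lia | lia].
Qed.

Theorem lemma3p4 (r : seq nat) (k : nat) (S1 S2 : nat -> pred nat) :
  inV r S1 -> inV r S2 ->
  [set F | CF r k S1 F] #= [set F | CF r k S2 F].
Proof.
move=> /inV_word_sets[w1 [sw1 S1w1 cnt1]] /inV_word_sets[w2 [sw2 S2w2 cnt2]].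
rewrite (CF_eq_sets _ _ S1w1) (CF_eq_sets _ _ S2w2).
apply: card_CF_adj_perm sw1; apply: perm_adj_perm.
by apply/allP => x _; rewrite /= cnt1 cnt2.
Qed.
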